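(* Let $k\in\mathbb{N}$. For purely even $k$-dimensional cubes $E,E'$ and a morphism $f\colon E\to E'$ given by the family $(f^\nu)$, let $E^-:=E$ and let $f^-\colon E^-\to E'^-$ be the morphism given by the family $(\mathrm{sgn}(\nu)f^\nu)$. Then $(\mathrm{id}_E)^-=\mathrm{id}_E$ and $(g\circ f)^-=g^-\circ f^-$ for all morphisms $f\colon E\to E'$, $g\colon E'\to E''$ of purely even $k$-dimensional cubes; hence ${}^-$ is a functor on the category of purely even $k$-dimensional cubes, which is inverse to itself and respects products.
   Context: $\mathcal{P}^k_+$: nonempty subsets of $\{1..k\}$; $\mathrm{Part}(I)$: set of partitions $\nu=\{\nu_1,\dots,\nu_\ell\}$ of $I$ into nonempty blocks, $\ell(\nu)=\ell$. A $k$-dimensional cube is a family $(E_I)_{I\in\mathcal{P}^k_+}$ of real vector spaces with total space $E=\bigoplus_IE_I$, written $v=\sum_Iv_I$; it is purely even if $E_I=\{0\}$ whenever $|I|$ is odd. A morphism of cubes $f\colon E\to E'$ is a map $\sum_Iv_I\mapsto\sum_I\sum_{\nu\in\mathrm{Part}(I)}f^\nu(v_{\nu_1},\dots,v_{\nu_{\ell(\nu)}})$ where each $f^\nu\colon E_{\nu_1}\times\dots\times E_{\nu_{\ell(\nu)}}\to E'_I$ is multilinear (blocks listed in lexicographic order, for sets compared as increasingly ordered tuples); composition is composition of maps, and products are $(E\times E')_I=E_I\times E'_I$. Sign of a partition $\nu$ of $I=\{i_1<\dots<i_s\}$: concatenate the elements of $\nu_1,\dots,\nu_\ell$ (each block in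 increasing order, blocks in lexicographic order) into a tuple, and $\mathrm{sgn}(\nu)$ is the sign of the permutation bringing this tuple to $(i_1,\dots,i_s)$. *)

From HB Require Import structures.
From mathcomp Require Import all_boot all_order all_algebra.
Set Implicit Arguments. Unset Strict Implicit. Unset Printing Implicit Defensive.
Import GRing.Theory.
Local Open Scope ring_scope.

Section Cubes.
Variables (R : fieldType) (k : nat).

(* Index sets: subsets of {1..k}, encoded as {set 'I_k}.  Only nonempty I
   are meaningful; the value of a cube at set0 is ignored everywhere. *)
Definition idx := {set 'I_k}.

Definition cube := idx -> lmodType R.

(* Total space E = (+)_{I nonempty} E_I, represented by dependent functions
   (finite product = direct sum); the component at set0 is irrelevant. *)
Definition total_space (E : cube) := forall I : idx, E I.

Definition purely_even (E : cube) : Prop :=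
  forall I : idx, odd #|I| -> forall v : E I, v = 0.

(* A morphism family: for each I and each partition nu of I (a set of blocks),
   a map f^nu.  Its arguments are indexed by the blocks themselves (so the
   lexicographic ordering of arguments is immaterial); f^nu may only depend
   on the components v_J for J in nu and must be multilinear in them. *)
Definition cube_family (E E' : cube) :=
  forall I : idx, {set idx} -> total_space E -> E' I.

Definition depends_only (E : cube) (W : Type) (P : {set idx})
  (F : total_space E -> W) : Prop :=
  forall v w : total_space E, (forall J, J \in P -> v J = w J) -> F v = F w.

Definition multilinear_on (E : cube) (W : lmodType R) (P : {set idx})
  (F : total_space E -> W) : Prop :=
  forall J, J \in P -> forall (v : total_space E) (a : R) (x y : E J),
    F (dfwith v (a *: x + y)) = a *: F (dfwith v x) + F (dfwith v y).

Definition is_morphism (E E' : cube) (F : cube_family E E') : Prop :=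
  forall (I : idx) (P : {set idx}), I != set0 -> partition P I ->
    depends_only P (F I P) /\ multilinear_on P (F I P).

Definition total_map (E E' : cube) (F : cube_family E E') (v : total_space E)
  : total_space E' :=
  fun I => \sum_(P : {set idx} | partition P I) F I P v.

Definition map_eq (E E' : cube) (f g : total_space E -> total_space E')
  : Prop := forall v I, I != set0 -> f v I = g v I.

Definition blockseq (J : idx) : seq nat := [seq val i | i <- enum J].

Fixpoint lexle (s t : seq nat) : bool :=
  match s, t with
  | [::], _ => true
  | _ :: _, [::] => false
  | x :: s', y :: t' => (x < y)%N || ((x == y) && lexle s' t')
  end.

Definition part_word (P : {set idx}) : seq nat :=
  flatten (sort lexle [seq blockseq J | J <- enum P]).

(* number of inversions of a sequence; the permutation sorting a sequence
   of distinct numbers has sign (-1)^(number of inversions) *)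
Definition inversions (s : seq nat) : nat :=
  \sum_(i < size s) \sum_(j < size s | (i < j)%N)
     (nth 0%N s j < nth 0%N s i)%N.

Definition sgn (P : {set idx}) : R := (-1) ^+ inversions (part_word P).

Definition minusF (E E' : cube) (F : cube_family E E') : cube_family E E' :=
  fun I P v => sgn P *: F I P v.

Definition prodc (E E' : cube) : cube := fun I => (E I * E' I)%type.

Definition pairF (E E' E'' : cube) (F : cube_family E E') (G : cube_family E E'')
  : cube_family E (prodc E' E'') := fun I P v => (F I P v, G I P v).

Definition fst_tot (E E' : cube) (v : total_space (prodc E E'))
  : total_space E := fun I => (v I).1.
Definition snd_tot (E E' : cube) (v : total_space (prodc E E'))
  : total_space E' := fun I => (v I).2.

End Cubes.

From HB Require Import structures.
From mathcomp Require Import all_boot all_order all_algebra.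
From mathcomp Require Import zify ring.
Import GRing.Theory.
Local Open Scope ring_scope.
Set Implicit Arguments. Unset Strict Implicit.

(* The sign of a partition is (-1)^(number of inversions of its concatenated
   blocks).  Listing the blocks in another order changes this number only by
   the crossing counts #{(x, y) | x in A, y in B, y < x} of pairs of blocks,
   and swapping A and B changes such a count by |A| |B|, which is even when
   the blocks have even size.  Hence, on blocks of even size, the sign is
   multiplicative under refinement: if nu refines mu by partitions c_J of the
   blocks J of mu, then sgn nu = sgn mu * prod_J sgn c_J.  Expanding g^mu by
   multilinearity writes (g o f)^nu as a sum over the partitions mu coarser
   than nu, and the multiplicativity turns this into (g o f)^- = g^- o f^-;
   blocks of odd size contribute nothing since E vanishes there.  The
   identity and the projections only have nonzero components f^{{I}}, and the
   trivial partition {I} has sign 1. *)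

Lemma inversions_nil : inversions [::] = 0%N.
Proof. by rewrite /inversions big_ord0. Qed.

Lemma inversions_cons x s :
  inversions (x :: s) = (count (fun y => y < x) s + inversions s)%N.
Proof.
have count_nth (p : pred nat) t : count p t = (\sum_(i < size t) p (nth 0%N t i))%N.
  by elim: t => [|y t IH]; rewrite ?big_ord0 // big_ord_recl /= IH.
rewrite /inversions /= big_ord_recl; congr (_ + _)%N.
  by rewrite big_mkcond big_ord_recl /= add0n count_nth.
apply: eq_bigr => i _.
by rewrite big_mkcond big_ord_recl /= add0n [RHS]big_mkcond.
Qed.

Definition cross_inversions (s t : seq nat) : nat :=
  (\sum_(x <- s) count (fun y => y < x) t)%N.

Lemma cross_inversions_catr s t1 t2 :
  cross_inversions s (t1 ++ t2) = (cross_inversions s t1 + cross_inversions s t2)%N.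
Proof. by rewrite /cross_inversions -big_split; apply: eq_bigr => x _; rewrite count_cat. Qed.

Lemma inversions_cat s1 s2 :
  inversions (s1 ++ s2) = (inversions s1 + inversions s2 + cross_inversions s1 s2)%N.
Proof.
elim: s1 => [|x s1 IH] /=; first by rewrite inversions_nil /cross_inversions big_nil addn0.
rewrite !inversions_cons IH /cross_inversions big_cons count_cat; lia.
Qed.

Lemma inversions_sorted s : sorted ltn s -> inversions s = 0%N.
Proof.
elim: s => [|x s IH] /=; first by rewrite inversions_nil.
rewrite (path_sortedE ltn_trans) => /andP[/allP x_lt sorted_s].
rewrite inversions_cons IH // addn0; apply/eqP; rewrite -leqn0 leqNgt -has_count.
by apply/hasPn => y /x_lt /= /ltnW; rewrite leqNgt.
Qed.

Section BlockSign.
Variables (R : comPzRingType) (k : nat).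
Local Notation idx := (idx k).
Implicit Types (A B : idx) (L : seq idx).

Lemma blockseq_sorted A : sorted ltn (blockseq A).
Proof.
have sub_enum : subseq (enum A) (enum 'I_k) by rewrite enumT /enum_mem filter_subseq.
apply: (subseq_sorted ltn_trans (map_subseq val sub_enum)).
by rewrite val_enum_ord iota_ltn_sorted.
Qed.

Definition block_inversions A B : nat := (\sum_(x in A) \sum_(y in B) (y < x))%N.

Definition block_sign A B : R := (-1) ^+ block_inversions A B.

Fixpoint blocks_sign L : R :=
  if L is A :: L' then (\prod_(B <- L') block_sign A B) * blocks_sign L' else 1.

Lemma cross_inversions_blockseq A B :
  cross_inversions (blockseq A) (blockseq B) = block_inversions A B.
Proof.
rewrite /cross_inversions /blockseq big_map big_enum; apply: eq_bigr => x _.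
rewrite count_map -big_enum -sum1_count big_mkcond; apply: eq_bigr => y _ /=.
by case: (y < x)%N.
Qed.

Lemma sign_cross_inversions_flatten A L :
  (-1) ^+ cross_inversions (blockseq A) (flatten [seq blockseq B | B <- L])
  = \prod_(B <- L) block_sign A B :> R.
Proof.
elim: L => [|B L IH] /=; first by rewrite big_nil /cross_inversions big1.
by rewrite cross_inversions_catr exprD IH big_cons cross_inversions_blockseq.
Qed.

Lemma blocks_sign_cat L1 L2 :
  blocks_sign (L1 ++ L2)
  = blocks_sign L1 * blocks_sign L2 * \prod_(A <- L1) \prod_(B <- L2) block_sign A B.
Proof.
elim: L1 => [|A L1 IH] /=; first by rewrite big_nil mul1r mulr1.
rewrite IH big_cat big_cons /=; ring.
Qed.

Lemma blocks_sign_move_front L1 A L2 :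
  (forall B, B \in L1 -> block_sign A B = block_sign B A) ->
  blocks_sign (L1 ++ A :: L2) = blocks_sign (A :: L1 ++ L2).
Proof.
move=> symA; rewrite /= !blocks_sign_cat big_cat /=.
under [X in _ * X = _]eq_bigr do rewrite big_cons.
rewrite big_split /=.
have -> : \prod_(B <- L1) block_sign B A = \prod_(B <- L1) block_sign A B.
  by rewrite big_seq_cond [RHS]big_seq_cond; apply: eq_bigr => B /andP[/symA ->].
ring.
Qed.

Lemma blocks_sign_perm L L' :
  {in L &, forall A B, block_sign A B = block_sign B A} -> perm_eq L L' ->
  blocks_sign L = blocks_sign L'.
Proof.
elim: L L' => [|A L1 IH] L' sym_L perm_L.
  by move: perm_L; rewrite perm_sym => /perm_nilP ->.
have A_L' : A \in L' by rewrite -(perm_mem perm_L) mem_head.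
case/splitPr: A_L' perm_L => L2 L3 perm_L.
have perm_L1 : perm_eq L1 (L2 ++ L3).
  by rewrite -(perm_cons A) (perm_trans perm_L) // (perm_catCA L2 [:: A] L3).
rewrite blocks_sign_move_front; last first.
  by move=> B B_L2; apply: sym_L; rewrite ?mem_head // (perm_mem perm_L) mem_cat B_L2.
rewrite /= (IH (L2 ++ L3)) ?(perm_big _ perm_L1) //.
by move=> B C B_L1 C_L1; apply: sym_L; rewrite inE ?B_L1 ?C_L1 orbT.
Qed.

Lemma block_inversionsC A B : [disjoint A & B] ->
  (block_inversions A B + block_inversions B A = #|A| * #|B|)%N.
Proof.
move=> dAB; rewrite /block_inversions [X in (_ + X)%N]exchange_big -big_split /=.
rewrite -sum1_card big_distrl /=; apply: eq_bigr => x xA.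
rewrite -big_split mul1n -sum1_card /=; apply: eq_bigr => y yB.
have : x != y by apply: contraTneq yB => <-; rewrite (disjointFr dAB xA).
by rewrite neq_ltn; case: ltngtP.
Qed.

Lemma block_signC A B : [disjoint A & B] -> ~~ odd #|A| -> ~~ odd #|B| ->
  block_sign A B = block_sign B A.
Proof.
move=> dAB evenA evenB; have := congr1 odd (block_inversionsC dAB).
rewrite oddD oddM (negbTE evenA) /= => odd_sum.
rewrite /block_sign -signr_odd -[in RHS]signr_odd.
by move: odd_sum; case: (odd (block_inversions A B)); case: (odd (block_inversions B A)).
Qed.

Lemma sign_sum (I : finType) (P : pred I) (f : I -> nat) :
  (-1) ^+ (\sum_(i | P i) f i)%N = \prod_(i | P i) (-1) ^+ f i :> R.
Proof. exact: (big_morph _ (fun m n => exprD _ m n) (expr0 _)). Qed.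

Lemma block_sign_coverl (P : {set idx}) B : trivIset P ->
  block_sign (cover P) B = \prod_(A in P) block_sign A B.
Proof. by move=> triv_P; rewrite /block_sign /block_inversions big_trivIset // sign_sum. Qed.

Lemma block_sign_coverr A (P : {set idx}) : trivIset P ->
  block_sign A (cover P) = \prod_(B in P) block_sign A B.
Proof.
move=> triv_P; rewrite /block_sign /block_inversions.
under eq_bigr do rewrite big_trivIset //.
by rewrite exchange_big sign_sum.
Qed.

End BlockSign.

Definition selection (K U : finType) (Q : {set K}) (S : K -> pred {set U})
    (c : {ffun K -> {set U}}) : bool :=
  [forall J, if J \in Q then S J (c J) else c J == set0].

Section Refinements.
Variable T : finType.
Implicit Types (I J B : {set T}) (mu nu rho : {set {set T}}).

Lemma partition_block_sub nu I B : partition nu I -> B \in nu -> B \subset I.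
Proof. by move=> part_nu B_nu; rewrite -(cover_partition part_nu) bigcup_sup. Qed.

Lemma block_eq_of_mem nu B B' x :
  trivIset nu -> B \in nu -> B' \in nu -> x \in B -> x \in B' -> B = B'.
Proof.
move=> triv_nu B_nu B'_nu xB xB'.
by rewrite -(def_pblock triv_nu B_nu xB) (def_pblock triv_nu B'_nu xB').
Qed.

Lemma partition_bigcup mu I (c : {set T} -> {set {set T}}) :
  partition mu I -> {in mu, forall J, partition (c J) J} ->
  partition (\bigcup_(J in mu) c J) I.
Proof.
move=> part_mu part_c; apply/and3P; split.
- apply/eqP/setP => x; rewrite -(cover_partition part_mu); apply/bigcupP/bigcupP.
  + case=> B /bigcupP [J J_mu B_cJ] xB; exists J => //.
    by rewrite -(cover_partition (part_c J J_mu)); apply/bigcupP; exists B.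
  + case=> J J_mu; rewrite -(cover_partition (part_c J J_mu)) => /bigcupP [B B_cJ xB].
    by exists B => //; apply/bigcupP; exists J.
- apply/trivIsetP => B B' /bigcupP [J J_mu B_cJ] /bigcupP [J' J'_mu B'_cJ'] neqBB'.
  have [eqJJ'|neqJJ'] := eqVneq J J'.
    case/and3P: (part_c J J_mu) => _ /trivIsetP triv_cJ _.
    by apply: triv_cJ; rewrite // eqJJ'.
  apply: (disjointW (partition_block_sub (part_c J J_mu) B_cJ)
                    (partition_block_sub (part_c J' J'_mu) B'_cJ')).
  by case/and3P: part_mu => _ /trivIsetP triv_mu _; apply: triv_mu.
- by apply/bigcupP => -[J J_mu]; case/and3P: (part_c J J_mu) => _ _ /negP.
Qed.

Lemma partition_sub_blocks nu rho J :
  trivIset nu -> set0 \notin nu -> partition rho J -> rho \subset nu ->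
  rho = [set B in nu | B \subset J].
Proof.
move=> triv_nu nu_neq0 part_rho sub_rho; apply/setP => B; rewrite inE.
apply/idP/andP => [B_rho|[B_nu BJ]].
  by rewrite (subsetP sub_rho) ?(partition_block_sub part_rho).
have /set0Pn [x xB] : B != set0 by apply: contraNneq nu_neq0 => <-.
have : x \in cover rho by rewrite (cover_partition part_rho) (subsetP BJ).
case/bigcupP => B' B'_rho xB'.
by rewrite (block_eq_of_mem triv_nu B_nu (subsetP sub_rho _ B'_rho) xB xB').
Qed.

Lemma partition_subset_eq rho nu I :
  partition rho I -> partition nu I -> rho \subset nu -> rho = nu.
Proof.
move=> part_rho part_nu sub_rho; case/and3P: (part_nu) => _ triv_nu nu_neq0.
rewrite (partition_sub_blocks triv_nu nu_neq0 part_rho sub_rho).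
by apply/setP => B; rewrite inE andb_idr // => /(partition_block_sub part_nu).
Qed.

Lemma blocks_sub_bigcup mu I (c : {set T} -> {set {set T}}) J :
  partition mu I -> {in mu, forall J, partition (c J) J} -> J \in mu ->
  [set B in \bigcup_(J in mu) c J | B \subset J] = c J.
Proof.
move=> part_mu part_c J_mu; case/and3P: (partition_bigcup part_mu part_c) => _ triv nu_neq0.
symmetry; apply: partition_sub_blocks => //; first exact: part_c.
by apply/subsetP => B B_cJ; apply/bigcupP; exists J.
Qed.

Definition refines nu mu := [forall J in mu, partition [set B in nu | B \subset J] J].

Lemma big_refinements (V : nmodType) mu I (phi : {set {set T}} -> V) :
  partition mu I ->
  \sum_(nu | partition nu I && refines nu mu) phi nu =
  \sum_(c | selection mu (fun J nu => partition nu J) c) phi (\bigcup_(J in mu) c J).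
Proof.
move=> part_mu.
rewrite (reindex_onto (fun c : {ffun {set T} -> {set {set T}}} => \bigcup_(J in mu) c J)
   (fun nu => [ffun J => if J \in mu then [set B in nu | B \subset J] else set0])); last first.
  move=> nu /andP [part_nu /forallP refine]; apply/setP => B; apply/bigcupP/idP.
    by case=> J J_mu; rewrite ffunE J_mu inE => /andP [].
  move=> B_nu; case/and3P: (part_nu) => cover_nu triv_nu nu_neq0.
  have /set0Pn [x xB] : B != set0 by apply: contraNneq nu_neq0 => <-.
  have : x \in cover mu.
    by rewrite (cover_partition part_mu) -(eqP cover_nu); apply/bigcupP; exists B.
  case/bigcupP => J J_mu xJ; exists J => //; rewrite ffunE J_mu.
  move: xJ; rewrite -{1}(cover_partition (implyP (refine J) J_mu)) => /bigcupP [B' B'_J xB'].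
  have B'_nu : B' \in nu by move: B'_J; rewrite inE => /andP [].
  by rewrite (block_eq_of_mem triv_nu B_nu B'_nu xB xB').
apply: eq_bigl => c; apply/andP/forallP => [[/andP [_ /forallP refine] /eqP/ffunP eq_c] J|sel_c].
  rewrite -(eq_c J) ffunE; case: (boolP (J \in mu)) => // J_mu.
  exact: (implyP (refine J) J_mu).
have part_c J : J \in mu -> partition (c J) J by move=> J_mu; have := sel_c J; rewrite J_mu.
split.
  rewrite (partition_bigcup part_mu part_c); apply/forallP => J; apply/implyP => J_mu.
  by rewrite (blocks_sub_bigcup part_mu part_c J_mu) part_c.
apply/eqP/ffunP => J; rewrite ffunE; case: ifP => J_mu.
  exact: (blocks_sub_bigcup part_mu part_c J_mu).
by have := sel_c J; rewrite J_mu => /eqP.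
Qed.

End Refinements.

Section PartitionSign.
Variables (R : fieldType) (k : nat).
Local Notation idx := (idx k).
Implicit Types (I J B : idx) (mu nu : {set idx}).

Definition lex_blocks nu : seq idx := sort (relpre (@blockseq k) lexle) (enum nu).

Lemma perm_lex_blocks nu : perm_eq (lex_blocks nu) (enum nu).
Proof. by rewrite /lex_blocks perm_sort. Qed.

Lemma mem_lex_blocks nu B : (B \in lex_blocks nu) = (B \in nu).
Proof. by rewrite (perm_mem (perm_lex_blocks nu)) mem_enum. Qed.

Lemma lex_blocks_uniq nu : uniq (lex_blocks nu).
Proof. by rewrite (perm_uniq (perm_lex_blocks nu)) enum_uniq. Qed.

Lemma big_lex_blocks nu (F : idx -> R) : \prod_(B <- lex_blocks nu) F B = \prod_(B in nu) F B.
Proof. by rewrite (perm_big _ (perm_lex_blocks nu)) big_enum. Qed.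

Lemma sgnE nu : sgn R nu = blocks_sign R (lex_blocks nu).
Proof.
rewrite /sgn /part_word sort_map /lex_blocks.
elim: (sort _ _) => [|A L IH] /=; first by rewrite inversions_nil.
rewrite inversions_cat inversions_sorted ?blockseq_sorted // add0n exprD IH.
by rewrite sign_cross_inversions_flatten mulrC.
Qed.

Lemma sgn_set1 I : sgn R [set I] = 1.
Proof. by rewrite sgnE /lex_blocks enum_set1 /= big_nil mulr1. Qed.

Lemma sgnK nu : sgn R nu * sgn R nu = 1.
Proof. by rewrite /sgn -exprD -signr_odd oddD addbb. Qed.

Lemma blocks_sign_flatten (c : idx -> {set idx}) (M : seq idx) :
  {in M, forall J, partition (c J) J} ->
  blocks_sign R (flatten [seq lex_blocks (c J) | J <- M])
  = blocks_sign R M * \prod_(J <- M) sgn R (c J).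
Proof.
elim: M => [|J1 M IH] part_c /=; first by rewrite big_nil mulr1.
rewrite blocks_sign_cat IH => [|J J_M]; last by apply: part_c; rewrite inE J_M orbT.
have -> : \prod_(A <- lex_blocks (c J1))
            \prod_(B <- flatten [seq lex_blocks (c J) | J <- M]) block_sign R A B
          = \prod_(J2 <- M) block_sign R J1 J2.
  under eq_bigr do rewrite big_flatten big_map.
  rewrite exchange_big /= big_seq_cond [RHS]big_seq_cond.
  apply: eq_bigr => J2 /andP [J2_M _].
  have part1 := part_c J1 (mem_head _ _).
  have part2 : partition (c J2) J2 by apply: part_c; rewrite inE J2_M orbT.
  rewrite -[in RHS](cover_partition part1) -[in RHS](cover_partition part2).
  rewrite block_sign_coverl ?(partition_trivIset part1) // big_lex_blocks.
  by apply: eq_bigr => A _; rewrite block_sign_coverr ?(partition_trivIset part2) ?big_lex_blocks.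
by rewrite big_cons sgnE; ring.
Qed.

Lemma flatten_lex_blocks_uniq (c : idx -> {set idx}) (M : seq idx) : uniq M ->
  {in M &, forall J1 J2, [exists B, (B \in c J1) && (B \in c J2)] -> J1 = J2} ->
  uniq (flatten [seq lex_blocks (c J) | J <- M]).
Proof.
elim: M => [|J M IH] //= /andP [J_notin_M uniq_M] inj_c.
rewrite cat_uniq lex_blocks_uniq IH ?andbT //; last first.
  by move=> J1 J2 J1_M J2_M; apply: inj_c; rewrite inE ?J1_M ?J2_M orbT.
apply/hasPn => B /flattenP [s /mapP [J' J'_M ->]]; rewrite !mem_lex_blocks => B_cJ'.
apply/negP => B_cJ; suff eqJJ' : J = J' by rewrite eqJJ' J'_M in J_notin_M.
by apply: inj_c; rewrite ?mem_head ?inE ?J'_M ?orbT //; apply/existsP; exists B; rewrite B_cJ.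
Qed.

Lemma lex_blocks_bigcup_perm mu I (c : idx -> {set idx}) :
  partition mu I -> {in mu, forall J, partition (c J) J} ->
  perm_eq (lex_blocks (\bigcup_(J in mu) c J))
          (flatten [seq lex_blocks (c J) | J <- lex_blocks mu]).
Proof.
move=> part_mu part_c.
apply: uniq_perm; [exact: lex_blocks_uniq | apply: flatten_lex_blocks_uniq | ].
- exact: lex_blocks_uniq.
- move=> J1 J2; rewrite !mem_lex_blocks => J1_mu J2_mu /existsP [B /andP [B_c1 B_c2]].
  have /set0Pn [x xB] : B != set0.
    by apply: contraTneq B_c1 => ->; case/and3P: (part_c J1 J1_mu).
  apply: (block_eq_of_mem (x := x) (partition_trivIset part_mu) J1_mu J2_mu).
    exact: subsetP (partition_block_sub (part_c J1 J1_mu) B_c1) _ xB.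
  exact: subsetP (partition_block_sub (part_c J2 J2_mu) B_c2) _ xB.
- move=> B; rewrite mem_lex_blocks; apply/bigcupP/flattenP.
    case=> J J_mu B_cJ; exists (lex_blocks (c J)); last by rewrite mem_lex_blocks.
    by apply: map_f; rewrite mem_lex_blocks.
  by case=> s /mapP [J J_mu ->] B_cJ; exists J; rewrite -mem_lex_blocks.
Qed.

Lemma sgn_bigcup mu I (c : idx -> {set idx}) :
  partition mu I -> {in mu, forall J, partition (c J) J} ->
  (forall J B, J \in mu -> B \in c J -> ~~ odd #|B|) ->
  sgn R (\bigcup_(J in mu) c J) = sgn R mu * \prod_(J in mu) sgn R (c J).
Proof.
move=> part_mu part_c even_c.
have part_nu := partition_bigcup part_mu part_c.
have sym_nu : {in lex_blocks (\bigcup_(J in mu) c J) &,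
                forall A B, block_sign R A B = block_sign R B A}.
  move=> A B; rewrite !mem_lex_blocks => A_nu B_nu.
  have [->//|neqAB] := eqVneq A B.
  apply: block_signC.
  - exact: (trivIsetP (partition_trivIset part_nu)).
  - by case/bigcupP: A_nu => J J_mu; apply: even_c.
  - by case/bigcupP: B_nu => J J_mu; apply: even_c.
rewrite !sgnE (blocks_sign_perm sym_nu (lex_blocks_bigcup_perm part_mu part_c)).
rewrite blocks_sign_flatten.
  by rewrite big_lex_blocks -sgnE.
by move=> J; rewrite mem_lex_blocks; apply: part_c.
Qed.

End PartitionSign.

Lemma big_selection_setD1 (K U : finType) (V : nmodType) (Q : {set K})
    (S : K -> pred {set U}) (J0 : K) (F : {set U} -> {ffun K -> {set U}} -> V) :
  J0 \in Q ->
  \sum_(r | S J0 r) \sum_(c | selection (Q :\ J0) S c) F r c =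
  \sum_(c | selection Q S c) F (c J0) [ffun J => if J == J0 then set0 else c J].
Proof.
move=> J0_Q; rewrite pair_big_dep /=.
rewrite (reindex_onto (fun rc : {set U} * {ffun K -> {set U}} =>
                         [ffun J => if J == J0 then rc.1 else rc.2 J])
                      (fun c => (c J0, [ffun J => if J == J0 then set0 else c J]))); last first.
  by move=> c _; apply/ffunP => J; rewrite !ffunE; case: eqP => [->|].
have J0_notin : (J0 \in Q :\ J0) = false by rewrite in_setD1 eqxx.
apply: eq_big => [[r c]|[r c] /andP [_ /forallP sel_c]] /=; last first.
  congr F; first by rewrite ffunE eqxx.
  apply/ffunP => J; rewrite !ffunE; case: eqP => [->|//].
  by move: (sel_c J0); rewrite J0_notin => /eqP.
apply/andP/andP => [[S_r /forallP sel_c] | [/forallP sel /eqP [eq_r eq_c]]].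
  split.
    apply/forallP => J; rewrite ffunE; have [->|neqJ] := eqVneq J J0; first by rewrite J0_Q.
    by move: (sel_c J); rewrite in_setD1 neqJ.
  apply/eqP; congr pair; first by rewrite ffunE eqxx.
  apply/ffunP => J; rewrite !ffunE; case: eqP => [->|//].
  by move: (sel_c J0); rewrite J0_notin => /eqP.
have cJ0 : c J0 = set0 by rewrite -eq_c ffunE eqxx.
split; first by move: (sel J0); rewrite ffunE eqxx J0_Q.
apply/forallP => J; have [->|neqJ] := eqVneq J J0; first by rewrite J0_notin cJ0.
by move: (sel J); rewrite ffunE (negbTE neqJ) in_setD1 neqJ.
Qed.

Section Multilinear.
Variables (R : fieldType) (k : nat) (E : cube R k) (W : lmodType R).
Variables (P : {set idx k}) (Fm : total_space E -> W).
Hypotheses (Fm_dep : depends_only P Fm) (Fm_lin : multilinear_on P Fm).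

Lemma multilinear_dfwith0 J v : J \in P -> Fm (dfwith v (0 : E J)) = 0.
Proof.
move=> J_P; have := Fm_lin J_P v 1 0 0; rewrite !scale1r addr0 => eqXX.
by apply: (addrI (Fm (dfwith v (0 : E J)))); rewrite addr0.
Qed.

Lemma multilinear_dfwithD J v (x y : E J) : J \in P ->
  Fm (dfwith v (x + y)) = Fm (dfwith v x) + Fm (dfwith v y).
Proof. by move=> J_P; have := Fm_lin J_P v 1 x y; rewrite !scale1r. Qed.

Lemma multilinear_dfwithZ J v a (x : E J) : J \in P ->
  Fm (dfwith v (a *: x)) = a *: Fm (dfwith v x).
Proof. by move=> J_P; have := Fm_lin J_P v a x 0; rewrite !addr0 multilinear_dfwith0 ?addr0. Qed.

Lemma multilinear_dfwith_sum J v (I : finType) (Pr : pred I) (a : I -> R) (f : I -> E J) :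
  J \in P ->
  Fm (dfwith v (\sum_(i | Pr i) a i *: f i)) = \sum_(i | Pr i) a i *: Fm (dfwith v (f i)).
Proof.
move=> J_P; rewrite (big_morph (fun x : E J => Fm (dfwith v x)) (id1 := 0) (op1 := +%R)
  (fun x y => multilinear_dfwithD v x y J_P) (multilinear_dfwith0 v J_P)).
by apply: eq_bigr => i _; rewrite multilinear_dfwithZ.
Qed.

Lemma multilinear_eq0 J (v : total_space E) : J \in P -> v J = 0 -> Fm v = 0.
Proof.
move=> J_P vJ0; rewrite -(multilinear_dfwith0 v J_P); apply: Fm_dep => j _.
by have [<-|neqJ] := eqVneq J j; rewrite ?dfwith_in ?dfwith_out.
Qed.

Lemma multilinear_expand_on (S : idx k -> pred {set idx k}) (a : idx k -> {set idx k} -> R)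
    (u : forall J, {set idx k} -> E J) (Q : {set idx k}) (v : total_space E) :
  Q \subset P ->
  Fm (fun J => if J \in Q then \sum_(r | S J r) a J r *: u J r else v J) =
  \sum_(c | selection Q S c)
    (\prod_(J in Q) a J (c J)) *: Fm (fun J => if J \in Q then u J (c J) else v J).
Proof.
move def_n: #|Q| => n; elim: n Q def_n v => [|n IH] Q card_Q v sub_QP.
  move/eqP: card_Q; rewrite cards_eq0 => /eqP ->.
  rewrite (big_pred1 [ffun=> set0]) => [|c]; last first.
    apply/forallP/eqP => [sel_c|-> J]; last by rewrite in_set0 ffunE.
    by apply/ffunP => J; rewrite ffunE; move: (sel_c J); rewrite in_set0 => /eqP.
  by rewrite big_set0 scale1r; apply: Fm_dep => J _; rewrite !in_set0.
have [J0 J0_Q] : exists J0, J0 \in Q by apply/set0Pn; rewrite -card_gt0 card_Q.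
have J0_P := subsetP sub_QP _ J0_Q.
have sub_Q'P : Q :\ J0 \subset P by rewrite (subset_trans _ sub_QP) ?subsetDl.
have card_Q' : #|Q :\ J0| = n by move: card_Q; rewrite (cardsD1 J0 Q) J0_Q => -[].
have J0_notin : (J0 \in Q :\ J0) = false by rewrite in_setD1 eqxx.
set sum_u := fun J => \sum_(r | S J r) a J r *: u J r.
transitivity (Fm (dfwith (fun J => if J \in Q :\ J0 then sum_u J else v J) (sum_u J0))).
  apply: Fm_dep => j _; have [<-|neqj] := eqVneq J0 j; first by rewrite dfwith_in J0_Q.
  by rewrite dfwith_out // in_setD1 eq_sym neqj.
rewrite multilinear_dfwith_sum //.
have expand_rest r :
    Fm (dfwith (fun J => if J \in Q :\ J0 then sum_u J else v J) (u J0 r)) =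
    \sum_(c | selection (Q :\ J0) S c) (\prod_(J in Q :\ J0) a J (c J)) *:
      Fm (fun J => if J \in Q :\ J0 then u J (c J) else dfwith v (u J0 r) J).
  rewrite -IH //; apply: Fm_dep => j _; have [<-|neqj] := eqVneq J0 j.
    by rewrite J0_notin !dfwith_in.
  by rewrite !dfwith_out.
under eq_bigr do rewrite expand_rest scaler_sumr.
rewrite big_selection_setD1 //; apply: eq_bigr => c _.
rewrite scalerA (big_setD1 J0 J0_Q) /=; congr (_ *: _).
  congr (_ * _); apply: eq_bigr => J.
  by rewrite in_setD1 ffunE => /andP [/negbTE ->].
apply: Fm_dep => j _; have [->|neqj] := eqVneq j J0.
  by rewrite J0_notin dfwith_in J0_Q.
by rewrite in_setD1 neqj /= ffunE (negbTE neqj) dfwith_out // eq_sym.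
Qed.

Lemma multilinear_expand (S : idx k -> pred {set idx k}) (a : idx k -> {set idx k} -> R)
    (u : forall J, {set idx k} -> E J) :
  Fm (fun J => \sum_(r | S J r) a J r *: u J r) =
  \sum_(c | selection P S c) (\prod_(J in P) a J (c J)) *: Fm (fun J => u J (c J)).
Proof.
have := multilinear_expand_on S a u (fun J => 0) (subxx P).
rewrite (Fm_dep (w := fun J => \sum_(r | S J r) a J r *: u J r)) => [->|J ->] //.
by apply: eq_bigr => c _; congr (_ *: _); apply: Fm_dep => J ->.
Qed.

End Multilinear.

Definition restrict (R : fieldType) (k : nat) (E : cube R k) (nu : {set idx k})
    (v : total_space E) : total_space E :=
  fun J => if J \in nu then v J else 0.

Section CubeMorphisms.
Variables (R : fieldType) (k : nat) (E E' : cube R k) (F : cube_family E E').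
Hypothesis F_morph : is_morphism F.
Local Notation idx := (idx k).
Implicit Types (I J B : idx) (nu rho : {set idx}) (v : total_space E).

Lemma morph_eq0 I nu v B :
  I != set0 -> partition nu I -> B \in nu -> v B = 0 -> F I nu v = 0.
Proof.
move=> I_neq0 part_nu; case: (F_morph I_neq0 part_nu) => dep lin.
exact: multilinear_eq0.
Qed.

Lemma morph_restrict_eq0 J rho nu v :
  J != set0 -> partition rho J -> ~~ (rho \subset nu) -> F J rho (restrict nu v) = 0.
Proof.
move=> J_neq0 part_rho /subsetPn [B B_rho B_notin_nu].
by apply: (morph_eq0 J_neq0 part_rho B_rho); rewrite /restrict (negbTE B_notin_nu).
Qed.

Lemma morph_total_restrict I nu v :
  I != set0 -> partition nu I -> F I nu v = total_map F (restrict nu v) I.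
Proof.
move=> I_neq0 part_nu; rewrite /total_map (bigD1 nu part_nu) /= big1 ?addr0.
  by case: (F_morph I_neq0 part_nu) => dep _; apply: dep => J J_nu; rewrite /restrict J_nu.
move=> rho /andP [part_rho neq_rho]; apply: morph_restrict_eq0 => //.
by apply: contra neq_rho => sub_rho; rewrite (partition_subset_eq part_rho part_nu sub_rho).
Qed.

Lemma total_restrict_block J rho nu v :
  trivIset nu -> set0 \notin nu -> J != set0 -> partition rho J -> rho \subset nu ->
  total_map F (restrict nu v) J = F J rho v.
Proof.
move=> triv_nu nu_neq0 J_neq0 part_rho sub_rho.
rewrite /total_map (bigD1 rho part_rho) /= big1 ?addr0.
  case: (F_morph J_neq0 part_rho) => dep _; apply: dep => B B_rho.
  by rewrite /restrict (subsetP sub_rho _ B_rho).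
move=> rho' /andP [part_rho' neq_rho']; apply: morph_restrict_eq0 => //.
apply: contra neq_rho' => sub_rho'.
by rewrite (partition_sub_blocks triv_nu nu_neq0 part_rho sub_rho)
           (partition_sub_blocks triv_nu nu_neq0 part_rho' sub_rho').
Qed.

Lemma total_restrict_eq0 J nu v :
  trivIset nu -> set0 \notin nu -> J != set0 ->
  ~~ partition [set B in nu | B \subset J] J -> total_map F (restrict nu v) J = 0.
Proof.
move=> triv_nu nu_neq0 J_neq0 not_part; rewrite /total_map big1 // => rho part_rho.
apply: morph_restrict_eq0 => //; apply: contra not_part => sub_rho.
by rewrite -(partition_sub_blocks triv_nu nu_neq0 part_rho sub_rho).
Qed.

End CubeMorphisms.

Section SignTwist.
Variables (R : fieldType) (k : nat).
Local Notation idx := (idx k).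

Lemma minusF_morph (E E' : cube R k) (F : cube_family E E') :
  is_morphism F -> is_morphism (minusF F).
Proof.
move=> F_morph I nu I_neq0 part_nu; case: (F_morph I nu I_neq0 part_nu) => dep lin.
split=> [v w eq_vw | J J_nu v a x y]; rewrite /minusF; first by rewrite (dep v w eq_vw).
by rewrite lin // scalerDr !scalerA mulrC.
Qed.

Lemma minusFK (E E' : cube R k) (F : cube_family E E') I nu v :
  minusF (minusF F) I nu v = F I nu v.
Proof. by rewrite /minusF scalerA sgnK scale1r. Qed.

Lemma minusF_blockwise (E E' : cube R k) (F : cube_family E E')
    (phi : forall I, E I -> E' I) :
  is_morphism F -> (forall I, phi I 0 = 0) ->
  map_eq (total_map F) (fun v I => phi I (v I)) ->
  map_eq (total_map (minusF F)) (fun v I => phi I (v I)).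
Proof.
move=> F_morph phi0 eq_F v I I_neq0; rewrite -(eq_F v I I_neq0) /total_map /minusF.
apply: eq_bigr => nu part_nu; rewrite (morph_total_restrict F_morph v I_neq0 part_nu).
rewrite eq_F // /restrict; case: ifP => I_nu; last by rewrite phi0 scaler0.
suff -> : nu = [set I] by rewrite sgn_set1 scale1r.
apply: esym; apply: partition_subset_eq (part_nu) _.
  by rewrite /partition cover1 eqxx trivIset1 inE eq_sym I_neq0.
by rewrite sub1set.
Qed.

Section Composition.
Variables (E E' E'' : cube R k) (F : cube_family E E') (G : cube_family E' E'').
Hypotheses (E_even : purely_even E) (F_morph : is_morphism F) (G_morph : is_morphism G).
Variables (I : idx) (mu : {set idx}) (v : total_space E).
Hypotheses (I_neq0 : I != set0) (part_mu : partition mu I).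

Let mu_neq0 J : J \in mu -> J != set0.
Proof. by move=> J_mu; apply: contraTneq J_mu => ->; case/and3P: part_mu. Qed.

Lemma comp_not_refines_eq0 nu :
  partition nu I -> ~~ refines nu mu -> G I mu (total_map F (restrict nu v)) = 0.
Proof.
move=> part_nu /forallPn [J]; rewrite negb_imply => /andP [J_mu not_part].
case/and3P: part_nu => _ triv_nu nu_neq0; case: (G_morph I_neq0 part_mu) => dep lin.
apply: (multilinear_eq0 dep lin J_mu).
by apply: (total_restrict_eq0 F_morph) => //; apply: mu_neq0.
Qed.

(* A block of odd size kills both sides; otherwise the signs agree by sgn_bigcup. *)
Lemma comp_refinement_term (c : {ffun idx -> {set idx}}) :
  selection mu (fun J nu => partition nu J) c ->
  sgn R (\bigcup_(J in mu) c J) *: G I mu (total_map F (restrict (\bigcup_(J in mu) c J) v))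
  = (sgn R mu * \prod_(J in mu) sgn R (c J)) *: G I mu (fun J => F J (c J) v).
Proof.
move=> /forallP sel_c.
have part_c J : J \in mu -> partition (c J) J by move=> J_mu; have := sel_c J; rewrite J_mu.
case/and3P: (partition_bigcup part_mu part_c) => _ triv_nu nu_neq0.
case: (G_morph I_neq0 part_mu) => dep lin.
rewrite (dep _ (fun J => F J (c J) v)) => [|J J_mu]; last first.
  apply: (total_restrict_block F_morph) => //; first exact: mu_neq0.
    exact: part_c.
  by apply/subsetP => B B_cJ; apply/bigcupP; exists J.
have [even_c|/forallPn [J]] := boolP [forall J in mu, forall B in c J, ~~ odd #|B|].
  rewrite (sgn_bigcup R part_mu part_c) // => J B J_mu B_cJ.
  by move/forallP: even_c => /(_ J) /implyP /(_ J_mu) /forallP /(_ B) /implyP; apply.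
rewrite negb_imply => /andP [J_mu /forallPn [B]]; rewrite negb_imply negbK => /andP [B_cJ odd_B].
rewrite (multilinear_eq0 dep lin J_mu (v := fun J => F J (c J) v)) ?scaler0 //.
exact: (morph_eq0 F_morph (mu_neq0 J_mu) (part_c J J_mu) B_cJ (E_even odd_B _)).
Qed.

Lemma minusF_comp_at :
  \sum_(nu | partition nu I) sgn R nu *: G I mu (total_map F (restrict nu v))
  = sgn R mu *: G I mu (total_map (minusF F) v).
Proof.
case: (G_morph I_neq0 part_mu) => dep lin.
rewrite (bigID (fun nu => refines nu mu)) /= [X in _ + X]big1 ?addr0; last first.
  by move=> nu /andP [part_nu /(comp_not_refines_eq0 part_nu) ->]; rewrite scaler0.
rewrite big_refinements //.
rewrite [total_map _ v]/total_map /minusF (multilinear_expand dep lin) scaler_sumr.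
by apply: eq_bigr => c sel_c; rewrite scalerA comp_refinement_term.
Qed.

End Composition.

Lemma minusF_comp (E E' E'' : cube R k) (F : cube_family E E') (G : cube_family E' E'')
    (H : cube_family E E'') :
  purely_even E -> is_morphism F -> is_morphism G -> is_morphism H ->
  map_eq (total_map H) (fun v => total_map G (total_map F v)) ->
  map_eq (total_map (minusF H)) (fun v => total_map (minusF G) (total_map (minusF F) v)).
Proof.
move=> E_even F_morph G_morph H_morph eq_H v I I_neq0.
rewrite {1}/total_map /minusF.
under eq_bigr => nu part_nu.
  rewrite (morph_total_restrict H_morph v I_neq0 part_nu) eq_H // {1}/total_map scaler_sumr.
over.
rewrite exchange_big /= {3}/total_map; apply: eq_bigr => mu part_mu.
exact: minusF_comp_at.
Qed.

End SignTwist.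

Theorem mainTheorem19 (R : fieldType) (k : nat) :
  (* f^- is again a morphism, and ^- is inverse to itself *)
  (forall (E E' : cube R k) (F : cube_family E E'),
      purely_even E -> purely_even E' -> is_morphism F ->
      is_morphism (minusF F) /\
      (forall I P v, minusF (minusF F) I P v = F I P v)) /\
  (* (id_E)^- = id_E *)
  (forall (E : cube R k) (F : cube_family E E),
      purely_even E -> is_morphism F ->
      map_eq (total_map F) (fun v => v) ->
      map_eq (total_map (minusF F)) (fun v => v)) /\
  (* (g o f)^- = g^- o f^- *)
  (forall (E E' E'' : cube R k) (F : cube_family E E') (G : cube_family E' E'')
          (H : cube_family E E''),
      purely_even E -> purely_even E' -> purely_even E'' ->
      is_morphism F -> is_morphism G -> is_morphism H ->
      map_eq (total_map H) (fun v => total_map G (total_map F v)) ->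
      map_eq (total_map (minusF H))
             (fun v => total_map (minusF G) (total_map (minusF F) v))) /\
  (* ^- respects products: projections and pairings are preserved *)
  (forall (E E' : cube R k) (P1 : cube_family (prodc E E') E)
          (P2 : cube_family (prodc E E') E'),
      purely_even E -> purely_even E' -> is_morphism P1 -> is_morphism P2 ->
      map_eq (total_map P1) (@fst_tot R k E E') ->
      map_eq (total_map P2) (@snd_tot R k E E') ->
      map_eq (total_map (minusF P1)) (@fst_tot R k E E') /\
      map_eq (total_map (minusF P2)) (@snd_tot R k E E')) /\
  (forall (E E' E'' : cube R k) (F : cube_family E E') (G : cube_family E E''),
      forall I P v, minusF (pairF F G) I P v = pairF (minusF F) (minusF G) I P v).
Proof.
split; first by move=> E E' F _ _ F_morph; split; [exact: minusF_morph | exact: minusFK].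
split; first by move=> E F _ F_morph; apply: (minusF_blockwise (phi := fun I x => x)).
split; first by move=> E E' E'' F G H E_even _ _; apply: minusF_comp.
split=> // E E' P1 P2 _ _ P1_morph P2_morph eq_P1 eq_P2; split.
  exact: (minusF_blockwise (phi := fun I x => x.1)).
exact: (minusF_blockwise (phi := fun I x => x.2)).
Qed.
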